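(* Let $B\in\mathbb{R}^{n\times n}$ be a nonsingular $M$-matrix and $C\in\mathbb{R}^{n\times n}$ an $M$-matrix such that $B^{-1}C\ge 0$, and suppose that $B-C-I$ is a nonsingular $M$-matrix. Let $\Phi$ be the maximal nonpositive solvent of $X^2+BX+C=0$ and $\Psi$ the maximal nonpositive solvent of the dual equation $CY^2+BY+I=0$. Set $X_0=E_0=-B^{-1}C$ and $Y_0=F_0=-B^{-1}$, and for $i=0,1,2,\dots$ define $E_{i+1}=E_i(I-Y_iX_i)^{-1}E_i$, $F_{i+1}=F_i(I-X_iY_i)^{-1}F_i$, $X_{i+1}=X_i+F_i(I-X_iY_i)^{-1}X_iE_i$, $Y_{i+1}=Y_i+E_i(I-Y_iX_i)^{-1}Y_iF_i$. Then these sequences are well-defined (all inverses exist), and for every $k\ge 1$: (a) $E_k=(I-Y_k\Phi)\Phi^{2^k}\ge 0$; (b) $F_k=(I-X_k\Psi)\Psi^{2^k}\ge 0$; (c) $I-X_kY_k$ and $I-Y_kX_k$ are nonsingular $M$-matrices; (d) $\Phi\le X_k\le X_{k-1}\le 0$, $\Psi\le Y_k\le Y_{k-1}\le 0$, and $0\le X_k-\Phi\le \Psi^{2^k}(-\Phi)\Phi^{2^k}$, $0\le Y_k-\Psi\le \Phi^{2^k}(-\Psi)\Psi^{2^k}$.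
   Context: Inequalities between matrices are entrywise; a matrix is nonpositive if all its entries are $\le 0$. A solvent of a matrix equation is a matrix solution; the maximal nonpositive solvent is a nonpositive solvent $\Phi$ with $X\le\Phi$ entrywise for every nonpositive solvent $X$ (these exist for both equations under the stated hypotheses). A $Z$-matrix is a real square matrix with nonpositive off-diagonal entries; a $Z$-matrix $A=sI-N$ with $N\ge 0$ is an $M$-matrix if $s\ge\rho(N)$ and a nonsingular $M$-matrix if $s>\rho(N)$, where $\rho$ is the spectral radius. *)

From HB Require Import structures.
From mathcomp Require Import all_boot all_order all_algebra.
From mathcomp.real_closed Require Import complex.
Set Implicit Arguments. Unset Strict Implicit. Unset Printing Implicit Defensive.
Import Order.TTheory GRing.Theory Num.Theory.
Local Open Scope ring_scope.

Section Defs.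
Variable (R : rcfType) (n : nat).

Definition mxle (A B : 'M[R]_n) : Prop := forall i j, A i j <= B i j.
Definition mxnonneg (A : 'M[R]_n) : Prop := mxle 0 A.

Definition eigenvalueC (N : 'M[R]_n) (l : R[i]) : Prop :=
  root (char_poly (map_mx (fun x : R => (x%:C)%C) N)) l.

Definition spectral_radius_le (N : 'M[R]_n) (s : R) : Prop :=
  forall l, eigenvalueC N l -> `|l| <= (s%:C)%C.
Definition spectral_radius_lt (N : 'M[R]_n) (s : R) : Prop :=
  forall l, eigenvalueC N l -> `|l| < (s%:C)%C.

Definition Mmatrix (A : 'M[R]_n) : Prop :=
  exists (s : R) (N : 'M[R]_n), A = s%:M - N /\ mxnonneg N /\ spectral_radius_le N s.
Definition nsMmatrix (A : 'M[R]_n) : Prop :=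
  exists (s : R) (N : 'M[R]_n), A = s%:M - N /\ mxnonneg N /\ spectral_radius_lt N s.

Definition max_nonpos_solvent_quad (B C Phi : 'M[R]_n) : Prop :=
  [/\ Phi *m Phi + B *m Phi + C = 0, mxle Phi 0 &
      forall X : 'M[R]_n, X *m X + B *m X + C = 0 -> mxle X 0 -> mxle X Phi].

Definition max_nonpos_solvent_dual (B C Psi : 'M[R]_n) : Prop :=
  [/\ C *m (Psi *m Psi) + B *m Psi + 1%:M = 0, mxle Psi 0 &
      forall Y : 'M[R]_n, C *m (Y *m Y) + B *m Y + 1%:M = 0 -> mxle Y 0 -> mxle Y Psi].

Fixpoint sda (B C : 'M[R]_n) (k : nat) : 'M[R]_n * 'M[R]_n * 'M[R]_n * 'M[R]_n :=
  match k with
  | 0 => (- (invmx B *m C), - invmx B, - (invmx B *m C), - invmx B)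
  | k'.+1 =>
    let: (X, Y, E, F) := sda B C k' in
    (X + F *m invmx (1%:M - X *m Y) *m X *m E,
     Y + E *m invmx (1%:M - Y *m X) *m Y *m F,
     E *m invmx (1%:M - Y *m X) *m E,
     F *m invmx (1%:M - X *m Y) *m F)
  end.

Definition sdaX B C k := (sda B C k).1.1.1.
Definition sdaY B C k := (sda B C k).1.1.2.
Definition sdaE B C k := (sda B C k).1.2.
Definition sdaF B C k := (sda B C k).2.

Fixpoint mxpow (A : 'M[R]_n) (k : nat) : 'M[R]_n :=
  match k with 0 => 1%:M | k'.+1 => A *m mxpow A k' end.

End Defs.

From HB Require Import structures.
From mathcomp Require Import all_boot all_order all_algebra.
From mathcomp.real_closed Require Import complex polyrcf.
From mathcomp Require Import ring lra.
Import Order.TTheory GRing.Theory Num.Theory ComplexField.Normc.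
Set Implicit Arguments. Unset Strict Implicit. Unset Printing Implicit Defensive.
Local Open Scope ring_scope.

(* Let u = (B - C - I)^-1 1 > 0.  Besides the signs X_k, Y_k <= 0 <= E_k, F_k,
   the doubling step preserves the subinvariance (-X_k + F_k) u < u and
   (-Y_k + E_k) u < u.  These make I - X_k Y_k a Z-matrix mapping the positive
   vector u to a positive vector, hence invertible with a nonnegative inverse,
   and show that the spectral radius of X_k Y_k is < 1.  The factorizations
   E_k = (I - Y_k Phi) Phi^(2^k) and X_k = Phi - F_k Phi Phi^(2^k), and their
   duals, hold at k = 0 by the two quadratic equations and are reproduced by
   the doubling step; the bounds of (d) are read off from them.
   That a nonsingular M-matrix s - N has a nonnegative inverse is proved by
   moving t down from +oo to s: t - N is inverse-nonnegative on a left
   neighbourhood of every point where it is, and this property cannot be lost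
   on an interval containing no root of det (t - N) nor of any nonzero entry
   of adj (t - N). *)

Section MatrixOrder.
Variables (R : rcfType) (n : nat).
Implicit Types (A M P Q : 'M[R]_n) (u v : 'cV[R]_n).

Definition inverse_nonneg A := A \in unitmx /\ mxnonneg (invmx A).

Definition posv u := forall i, 0 < u i 0.
Definition vle u v := forall i, u i 0 <= v i 0.
Definition vlt u v := forall i, u i 0 < v i 0.

Definition onev : 'cV[R]_n := const_mx 1.

Lemma mxnonneg_mul P Q : mxnonneg P -> mxnonneg Q -> mxnonneg (P *m Q).
Proof.
move=> hP hQ i j; rewrite !mxE; apply: sumr_ge0 => k _; apply: mulr_ge0.
  by have := hP i k; rewrite mxE.
by have := hQ k j; rewrite mxE.
Qed.

Lemma mxnonneg_add P Q : mxnonneg P -> mxnonneg Q -> mxnonneg (P + Q).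
Proof.
by move=> hP hQ i j; have := hP i j; have := hQ i j; rewrite !mxE => b a; apply: addr_ge0.
Qed.

Lemma mxnonneg_mulNN P Q : mxnonneg (- P) -> mxnonneg (- Q) -> mxnonneg (P *m Q).
Proof. by move=> hP hQ; rewrite -[P *m Q]opprK -mulmxN -mulNmx; apply: mxnonneg_mul. Qed.

Lemma mxle_subr P Q : mxnonneg (Q - P) -> mxle P Q.
Proof. by move=> h i j; have := h i j; rewrite !mxE subr_ge0. Qed.

Lemma mxle0_oppr P : mxle P 0 -> mxnonneg (- P).
Proof. by move=> h i j; have := h i j; rewrite !mxE oppr_ge0. Qed.

Lemma vle_mulmx M u v : mxnonneg M -> vle u v -> vle (M *m u) (M *m v).
Proof.
move=> hM huv i; rewrite !mxE; apply: ler_sum => j _; apply: ler_wpM2l => //.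
by have := hM i j; rewrite mxE.
Qed.

Lemma vle0_mulmx M u : mxnonneg M -> vle 0 u -> vle 0 (M *m u).
Proof. by move=> hM hu; have := vle_mulmx hM hu; rewrite mulmx0. Qed.

Lemma posv_vle0 u : posv u -> vle 0 u.
Proof. by move=> hu i; rewrite mxE ltW. Qed.

Lemma mxDE m p (A B : 'M[R]_(m, p)) i j : (A + B) i j = A i j + B i j.
Proof. by rewrite mxE. Qed.

Lemma mxNE m p (A : 'M[R]_(m, p)) i j : (- A) i j = - A i j.
Proof. by rewrite mxE. Qed.

Lemma mulmx_onev M i : (M *m onev) i 0 = \sum_j M i j.
Proof. by rewrite mxE; apply: eq_bigr => j _; rewrite mxE mulr1. Qed.

Lemma posv_mulmx_onev M : M \in unitmx -> mxnonneg M -> posv (M *m onev).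
Proof.
move=> hU hM i; have hMi k : 0 <= M i k by have := hM i k; rewrite mxE.
rewrite mulmx_onev lt_def sumr_ge0 ?andbT //.
apply/negP => /eqP /psumr_eq0P row0.
have := congr1 (fun X : 'M[R]_n => X i i) (mulmxV hU).
rewrite !mxE eqxx big1 => [/eqP|j _]; first by rewrite eq_sym oner_eq0.
by rewrite row0 ?mul0r.
Qed.

Lemma invmxM P Q : P \in unitmx -> Q \in unitmx ->
  invmx (P *m Q) = invmx Q *m invmx P.
Proof.
move=> hP hQ; have hPQ : P *m Q \in unitmx by rewrite unitmx_mul hP hQ.
rewrite -[RHS]mulmx1 -(mulmxV hPQ) !mulmxA -(mulmxA (invmx Q)) mulVmx // mulmx1.
by rewrite mulVmx // mul1mx.
Qed.

Lemma inverse_nonneg_mul P Q :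
  inverse_nonneg P -> inverse_nonneg Q -> inverse_nonneg (P *m Q).
Proof.
move=> [hPU hP] [hQU hQ]; split; first by rewrite unitmx_mul hPU hQU.
by rewrite invmxM //; apply: mxnonneg_mul.
Qed.

Lemma mxpowD A a b : mxpow A (a + b) = mxpow A a *m mxpow A b.
Proof. by elim: a => [|a IH] /=; rewrite ?mul1mx // IH mulmxA. Qed.

Lemma mxpow_double A k : mxpow A (2 ^ k.+1) = mxpow A (2 ^ k) *m mxpow A (2 ^ k).
Proof. by rewrite expnS mul2n -addnn mxpowD. Qed.

Lemma mxpow_nonpos_sign A j : mxnonneg (- A) ->
  mxnonneg (mxpow A (2 * j)) /\ mxnonneg (- mxpow A (2 * j).+1).
Proof.
move=> hA; elim: j => [|j [IH _]].
  by split=> [i k|]; rewrite /= ?mulmx1 // !mxE; case: (i == k); rewrite ?ler01.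
have hA2 : mxnonneg (mxpow A (2 * j.+1)).
  by rewrite mulnS /=; apply: mxnonneg_mulNN; rewrite // -mulNmx; apply: mxnonneg_mul.
by split=> //=; rewrite -mulNmx; apply: mxnonneg_mul.
Qed.

End MatrixOrder.

Section Zmatrix.
Variables (R : rcfType) (n : nat).
Implicit Types (A M : 'M[R]_n) (u x : 'cV[R]_n).

Definition Zmx A := forall i j, i != j -> A i j <= 0.

Lemma Zmx_scalar_sub (a : R) M : mxnonneg M -> Zmx (a%:M - M).
Proof.
move=> hM i j hij; rewrite !mxE (negbTE hij) mulr0n sub0r oppr_le0.
by have := hM i j; rewrite mxE.
Qed.

(* Compare x with the largest multiple c u lying below it: if some x i < 0 then
   c < 0, and the row where c u touches x gives (A x) i < 0. *)
Lemma Zmx_semipositive_mono A u x : Zmx A -> posv u -> posv (A *m u) ->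
  vle 0 (A *m x) -> vle 0 x.
Proof.
move=> hZ hu hAu hAx i; rewrite mxE leNgt; apply/negP => xi.
pose F k := x k 0 / u k 0.
case: (@Order.TotalTheory.arg_minP _ _ _ i predT F erefl) => i0 _ hmin.
set c := F i0 in hmin.
have hc : c < 0.
  by apply: (le_lt_trans (hmin i erefl)); rewrite /F pmulr_llt0 ?invr_gt0.
have hcu j : c * u j 0 <= x j 0 by have := hmin j erefl; rewrite /F ler_pdivlMr.
suff : \sum_j A i0 j * x j 0 <= c * (A *m u) i0 0.
  have := hAx i0; rewrite [(A *m x) _ _]mxE mxE => h1 h2.
  by have := le_trans h1 h2; rewrite nmulr_rge0 // leNgt hAu.
rewrite mxE mulr_sumr; apply: ler_sum => j _; rewrite mulrCA.
have [->|hne] := eqVneq j i0; first by rewrite /c /F divfK // gt_eqF.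
by apply: ler_wnM2l; [apply: hZ; rewrite eq_sym | exact: hcu].
Qed.

Lemma Zmx_semipositive_inverse_nonneg A u : Zmx A -> posv u -> posv (A *m u) ->
  inverse_nonneg A.
Proof.
move=> hZ hu hAu; have hm := Zmx_semipositive_mono hZ hu hAu.
have hU : A \in unitmx.
  rewrite unitmxE unitfE -det_tr; apply/negP => /det0P [v vn0 hv].
  have hAv : A *m v^T = 0 by rewrite -[A]trmxK -trmx_mul hv trmx0.
  have hv1 := hm v^T (fun i => ltac:(by rewrite hAv mxE)).
  have hv2 := hm (- v^T) (fun i => ltac:(by rewrite mulmxN hAv oppr0 mxE)).
  move/eqP: vn0; apply; apply/rowP => j; apply/eqP.
  have := hv1 j; have := hv2 j; rewrite !mxE => a b.
  by rewrite eq_le b -oppr_ge0 a.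
split=> // i j; rewrite mxE.
have hcol : vle 0 (A *m col j (invmx A)).
  by move=> k; rewrite colE mulmxA mulmxV // mul1mx !mxE; case: (k == j).
by have := hm _ hcol i; rewrite !mxE.
Qed.

Lemma scalar_sub_inverse_nonneg (a : R) M : mxnonneg M ->
  (forall i, \sum_j M i j < a) -> inverse_nonneg (a%:M - M).
Proof.
move=> hM hrow; apply: (Zmx_semipositive_inverse_nonneg (u := onev R n)).
- exact: Zmx_scalar_sub.
- by move=> i; rewrite mxE ltr01.
move=> i; rewrite mulmx_onev.
rewrite (eq_bigr (fun j => a *+ (i == j) - M i j)); last by move=> j _; rewrite !mxE.
rewrite sumrB (bigD1 i) //= eqxx mulr1n big1 ?addr0 ?subr_gt0 // => j.
by rewrite eq_sym => /negbTE ->.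
Qed.

End Zmatrix.

Section SpectralBound.
Variables (R : rcfType) (n : nat).

Lemma normc_sum (I : Type) (r : seq I) (F : I -> R[i]) :
  normc (\sum_(i <- r) F i) <= \sum_(i <- r) normc (F i).
Proof.
apply: (big_rec2 (fun x y => normc x <= y)); first by rewrite normc0.
by move=> i y1 y2 _ h; apply: (le_trans (le_normcD _ _)); rewrite lerD2l.
Qed.

Lemma normc_real (x : R) : normc (x%:C)%C = `|x|.
Proof. by rewrite /normc /= expr0n /= addr0 sqrtr_sqr. Qed.

Lemma normc_ge0 (x : R[i]) : 0 <= normc x.
Proof. by case: x => a b; rewrite /normc sqrtr_ge0. Qed.

(* For a left eigenvector v of N, |l| |v| <= |v| N entrywise; pairing with u
   gives |l| (|v| u) <= |v| N u < |v| u. *)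
Lemma subinvariant_spectral_radius_lt1 (N : 'M[R]_n) (u : 'cV[R]_n) :
  mxnonneg N -> posv u -> vlt (N *m u) u -> spectral_radius_lt N 1.
Proof.
move=> hN hu hNu l; rewrite /eigenvalueC -eigenvalue_root_char.
move=> /eigenvalueP [v hv vn0].
pose a i := normc (v 0 i).
have ha i : 0 <= a i by apply: normc_ge0.
have hleft j : normc l * a j <= \sum_i a i * N i j.
  have := congr1 (fun M : 'rV[R[i]]_n => M 0 j) hv; rewrite !mxE => e.
  rewrite /a -normcM -e; apply: (le_trans (normc_sum _ _)).
  apply: ler_sum => i _; rewrite normcM mxE normc_real ger0_norm //.
  by have := hN i j; rewrite mxE.
have [i0 hi0] : exists i0, 0 < a i0.
  apply/existsP; apply: contraR vn0 => /existsPn h; apply/eqP/rowP => j.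
  rewrite mxE; apply: eq0_normc; have := h j.
  by rewrite lt_def negb_and negbK ha orbF => /eqP.
pose S := \sum_i a i * u i 0.
pose T := \sum_i a i * (N *m u) i 0.
have hS : 0 < S.
  rewrite /S (bigD1 i0) //= ltr_pwDl ?mulr_gt0 //.
  by apply: sumr_ge0 => i _; apply: mulr_ge0 => //; apply: ltW.
have hTS : T < S.
  rewrite /S /T (bigD1 i0) //= [X in _ < X](bigD1 i0) //=.
  apply: ltr_leD; first by rewrite ltr_pM2l.
  by apply: ler_sum => i _; apply: ler_wpM2l => //; apply: ltW.
have hlT : normc l * S <= T.
  rewrite /S /T mulr_sumr.
  under eq_bigr do rewrite mulrA.
  apply: (le_trans (y := \sum_j (\sum_i a i * N i j) * u j 0)).
    by apply: ler_sum => j _; apply: ler_wpM2r; [apply: ltW | apply: hleft].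
  under eq_bigr do rewrite mulr_suml.
  rewrite exchange_big /=; apply: ler_sum => i _; rewrite mxE mulr_sumr.
  by apply: ler_sum => j _; rewrite mulrA.
have : normc l < 1 by rewrite -(ltr_pM2r hS) mul1r; exact: le_lt_trans hlT hTS.
by rewrite -ltcR.
Qed.

Lemma subinvariant_nsMmatrix (N : 'M[R]_n) (u : 'cV[R]_n) :
  mxnonneg N -> posv u -> vlt (N *m u) u -> nsMmatrix (1%:M - N).
Proof.
by move=> hN hu hNu; exists 1, N; split=> //; split=> //;
  apply: subinvariant_spectral_radius_lt1 hu hNu.
Qed.

End SpectralBound.

Lemma ge0_quotient_transfer (R : realFieldType) (D1 D2 g1 g2 : R) :
  D1 != 0 -> D2 != 0 -> g2 != 0 -> 0 <= D1 * D2 -> 0 <= g1 * g2 ->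
  0 <= D2^-1 * g2 -> 0 <= D1^-1 * g1.
Proof.
move=> hD1 hD2 hg2 hD hg h2.
have p2 : 0 < g2 * D2.
  have -> : g2 * D2 = (D2^-1 * g2) * D2 ^+ 2 by field.
  by rewrite mulr_gt0 ?exprn_even_gt0 // lt_def h2 andbT mulf_neq0 ?invr_eq0.
have p1 : 0 <= g1 * D1.
  have e : (g1 * D1) * (g2 * D2) = (g1 * g2) * (D1 * D2) by ring.
  by rewrite -(pmulr_lge0 _ p2) e mulr_ge0.
have -> : D1^-1 * g1 = (g1 * D1) / (D1 ^+ 2) by field.
by rewrite divr_ge0 // sqr_ge0.
Qed.

Lemma noroot_horner_mul_ge0 (R : rcfType) (p : {poly R}) a b : a <= b ->
  {in `]a, b], forall z, ~~ root p z} -> 0 <= p.[a] * p.[b].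
Proof.
move=> hab hz; rewrite leNgt; apply/negP => hneg.
have [x hx rx] := polyrcf.poly_ivt hab (ltW hneg).
have [xa|xa] := eqVneq x a; first by move: hneg; rewrite -xa (rootP rx) mul0r ltxx.
have hxab : x \in `]a, b] by rewrite in_itv /= lt_def xa !(itvP hx).
by move: (hz x hxab); rewrite rx.
Qed.

Section Continuation.
Variables (R : rcfType) (n : nat) (N : 'M[R]_n) (s : R).
Hypotheses (hN : mxnonneg N) (hs : spectral_radius_lt N s).

Definition char_adj := \adj (char_poly_mx N).

Lemma char_poly_mx_eval t : map_mx (horner_eval t) (char_poly_mx N) = t%:M - N.
Proof.
apply/matrixP => i j; rewrite !mxE horner_evalE hornerD hornerN hornerC.
by case: (i == j); rewrite /= ?mulr1n ?mulr0n ?hornerX ?horner0.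
Qed.

Lemma det_shift t : \det (t%:M - N) = (char_poly N).[t].
Proof. by rewrite -char_poly_mx_eval det_map_mx. Qed.

Lemma invmx_shift t i j : t%:M - N \in unitmx ->
  invmx (t%:M - N) i j = ((char_poly N).[t])^-1 * (char_adj i j).[t].
Proof.
move=> hU; rewrite /invmx hU mxE det_shift.
by rewrite -char_poly_mx_eval -map_mx_adj mxE.
Qed.

Lemma shift_unitmx t : s <= t -> t%:M - N \in unitmx.
Proof.
move=> hst; rewrite unitmxE unitfE det_shift; apply/negP => /eqP ht.
have : eigenvalueC N (t%:C)%C.
  rewrite /eigenvalueC.
  change (root (char_poly (map_mx (real_complex R) N)) (real_complex R t)).
  by rewrite -map_char_poly fmorph_root; apply/rootP.
move/hs; change ((normc (t%:C)%C)%:C < s%:C -> False)%C.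
rewrite ltcR normc_real => hts.
by have := lt_le_trans hts (le_trans hst (ler_norm t)); rewrite ltxx.
Qed.

Lemma shift_inverse_nonneg_large t : 1 + \sum_k \sum_j N k j <= t ->
  inverse_nonneg (t%:M - N).
Proof.
move=> ht; apply: scalar_sub_inverse_nonneg => // i.
apply: (le_lt_trans (y := \sum_k \sum_j N k j)); last first.
  by apply: lt_le_trans ht; rewrite ltrDr ltr01.
rewrite [X in _ <= X](bigD1 i) //= lerDl; apply: sumr_ge0 => k _.
by apply: sumr_ge0 => j _; have := hN k j; rewrite mxE.
Qed.

(* t - N = (z - N) (1 - (z - t) (z - N)^-1), and the second factor is
   inverse-nonnegative as long as (z - t) times the row sums of (z - N)^-1
   stays < 1. *)
Lemma shift_inverse_nonneg_left z : inverse_nonneg (z%:M - N) ->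
  exists2 d, 0 < d & forall t, z - d < t -> t <= z -> inverse_nonneg (t%:M - N).
Proof.
move=> [hU hRz]; set Rz := invmx _ in hRz.
have hRz_ge0 k j : 0 <= Rz k j by have := hRz k j; rewrite mxE.
pose S := \sum_k \sum_j Rz k j.
have hS : 0 <= S by apply: sumr_ge0 => k _; apply: sumr_ge0.
exists (1 + S)^-1; first by rewrite invr_gt0 ltr_wpDr.
move=> t hzt htz; set e := z - t.
have he : 0 <= e by rewrite subr_ge0.
have hed : e < (1 + S)^-1 by rewrite /e ltrBlDr addrC -ltrBlDr.
have -> : t%:M - N = (z%:M - N) *m (1%:M - e *: Rz).
  rewrite mulmxBr mulmx1 -scalemxAr mulmxV // scale_scalar_mx mulr1 /e.
  by apply/matrixP => i j; rewrite !mxE; case: (i == j); rewrite /= ?mulr1n ?mulr0n; ring.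
apply: inverse_nonneg_mul; first by [].
apply: scalar_sub_inverse_nonneg => [i j|i].
  by rewrite !mxE mulr_ge0.
rewrite (eq_bigr (fun j => e * Rz i j)); last by move=> j _; rewrite mxE.
rewrite -mulr_sumr; apply: (le_lt_trans (y := e * S)).
  rewrite ler_wpM2l // [X in _ <= X](bigD1 i) //= lerDl.
  by apply: sumr_ge0 => k _; apply: sumr_ge0.
apply: (le_lt_trans (y := (1 + S)^-1 * S)); first by rewrite ler_wpM2r // ltW.
by rewrite mulrC ltr_pdivrMr ?ltr_wpDr // mul1r ltrDr.
Qed.

Definition crit_poly :=
  char_poly N * \prod_i \prod_(j | char_adj i j != 0) char_adj i j.

Lemma crit_poly_neq0 : crit_poly != 0.
Proof.
apply: mulf_neq0; first exact: monic_neq0 (char_poly_monic N).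
by apply/prodf_neq0 => i _; apply/prodf_neq0.
Qed.

Lemma crit_poly_noroot z : ~~ root crit_poly z ->
  ~~ root (char_poly N) z /\ (forall i j, char_adj i j != 0 -> ~~ root (char_adj i j) z).
Proof.
rewrite /crit_poly rootM negb_or => /andP [hchar hadj]; split=> // i j hij.
apply: contra hadj => /rootP hr; apply/rootP.
by rewrite horner_prod (bigD1 i) //= horner_prod (bigD1 j) //= hr !mul0r.
Qed.

Lemma shift_inverse_nonneg_noroot t1 t2 : s <= t1 -> t1 <= t2 ->
  {in `]t1, t2], forall z, ~~ root crit_poly z} ->
  inverse_nonneg (t2%:M - N) -> inverse_nonneg (t1%:M - N).
Proof.
move=> hs1 h12 hz; have [<- //|hne] := eqVneq t1 t2; move=> [hU2 hN2].
have hU1 := shift_unitmx hs1; split=> // i j; rewrite mxE invmx_shift //.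
have ht2 : t2 \in `]t1, t2] by rewrite in_itv /= lexx andbT lt_def eq_sym hne.
have [hchar hadj] := crit_poly_noroot (hz t2 ht2).
have [->|hg] := eqVneq (char_adj i j) 0; first by rewrite horner0 mulr0.
apply: (@ge0_quotient_transfer _ _ (char_poly N).[t2] _ (char_adj i j).[t2]).
- by have := hU1; rewrite unitmxE unitfE det_shift.
- by have := hU2; rewrite unitmxE unitfE det_shift.
- by have := hadj i j hg; apply: contra => /eqP/rootP.
- by apply: noroot_horner_mul_ge0 => // x /hz /crit_poly_noroot [].
- by apply: noroot_horner_mul_ge0 => // x /hz /crit_poly_noroot [_ /(_ i j hg)].
- by have := hN2 i j; rewrite mxE invmx_shift.
Qed.

Lemma shift_inverse_nonneg_before t z : s <= t -> t < z ->
  {in `]t, z[, forall y, ~~ root crit_poly y} ->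
  inverse_nonneg (z%:M - N) -> inverse_nonneg (t%:M - N).
Proof.
move=> hst htz hz /shift_inverse_nonneg_left [d hd hleft].
have hd2 : 0 < d / 2%:R by rewrite divr_gt0 // ltr0n.
pose t' := Num.max t (z - d / 2%:R).
have ht'z : t' < z by rewrite gt_max htz gtrBl.
apply: (shift_inverse_nonneg_noroot (t2 := t')) => //; first by rewrite le_max lexx.
  move=> y; rewrite !in_itv /= => /andP [hty hyt']; apply: hz.
  by rewrite in_itv /= hty (le_lt_trans hyt').
apply: hleft; last exact: ltW.
by rewrite lt_max ltrD2l ltrN2 ltr_pdivrMr ?ltr0n // ltr_pMr // ltr1n orbT.
Qed.

Lemma shift_inverse_nonneg t : s <= t -> inverse_nonneg (t%:M - N).
Proof.
set T := 1 + \sum_k \sum_j N k j.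
suff gen l : forall t, roots crit_poly t T = l -> s <= t -> inverse_nonneg (t%:M - N).
  exact: gen.
elim: l => [|y l IH] {}t hl hst.
  have [hTt|htT] := leP T t; first exact: shift_inverse_nonneg_large.
  apply: (shift_inverse_nonneg_before hst htT).
    exact: roots_nil crit_poly_neq0 hl.
  exact: shift_inverse_nonneg_large.
move/eqP: hl; rewrite roots_cons => /and5P [_ hy /eqP hnil _ /eqP hl].
have hty : t < y by rewrite (itvP hy).
apply: (shift_inverse_nonneg_before hst hty); first exact: roots_nil crit_poly_neq0 hnil.
by apply: IH hl _; rewrite (le_trans hst) // ltW.
Qed.

End Continuation.

Lemma nsMmatrix_inverse_nonneg (R : rcfType) (n : nat) (A : 'M[R]_n) :
  nsMmatrix A -> inverse_nonneg A.
Proof. by case=> s [N [-> [hN hs]]]; apply: shift_inverse_nonneg hN hs _ (lexx s). Qed.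

Section DoublingStep.
Variables (R : rcfType) (n : nat) (u : 'cV[R]_n).
Hypothesis hu : posv u.
Implicit Types X Y E F : 'M[R]_n.

Definition doubleX X Y E F := X + F *m invmx (1%:M - X *m Y) *m X *m E.
Definition doubleE X Y E := E *m invmx (1%:M - Y *m X) *m E.

Record sda_invariant X Y E F : Prop := SdaInvariant {
  invariant_X : mxnonneg (- X);
  invariant_Y : mxnonneg (- Y);
  invariant_E : mxnonneg E;
  invariant_F : mxnonneg F;
  invariant_XF : vlt ((- X + F) *m u) u;
  invariant_YE : vlt ((- Y + E) *m u) u }.

Lemma sda_invariantC X Y E F : sda_invariant X Y E F -> sda_invariant Y X F E.
Proof. by case. Qed.

Lemma sda_invariant_mulXY_lt X Y E F : sda_invariant X Y E F -> vlt (X *m Y *m u) u.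
Proof.
move=> [hX hY hE hF hXF hYE] i.
have hYu : vle ((- Y) *m u) u.
  move=> j; have := hYE j; have := vle0_mulmx hE (posv_vle0 hu) j.
  by rewrite mulmxDl mxDE mxE; lra.
have -> : X *m Y *m u = (- X) *m ((- Y) *m u) by rewrite mulmxA mulNmx mulmxN opprK.
have := vle_mulmx hX hYu i; have := hXF i; have := vle0_mulmx hF (posv_vle0 hu) i.
by rewrite mulmxDl mxDE mxE; lra.
Qed.

Lemma sda_invariant_inverse_nonneg X Y E F : sda_invariant X Y E F ->
  inverse_nonneg (1%:M - X *m Y).
Proof.
move=> hinv; have [hX hY _ _ _ _] := hinv.
apply: (Zmx_semipositive_inverse_nonneg (u := u)) => //.
  by apply: Zmx_scalar_sub; apply: mxnonneg_mulNN.
move=> i; have := sda_invariant_mulXY_lt hinv i.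
by rewrite mulmxBl mul1mx mxDE mxNE subr_gt0.
Qed.

Lemma doubleX_le X Y E F : sda_invariant X Y E F -> mxnonneg (X - doubleX X Y E F).
Proof.
move=> hinv; have [hX _ hE hF _ _] := hinv.
have [_ hM] := sda_invariant_inverse_nonneg hinv.
have -> : X - doubleX X Y E F = F *m invmx (1%:M - X *m Y) *m (- X) *m E.
  by rewrite /doubleX opprD addrA subrr add0r mulmxN mulNmx.
by do 3!apply: mxnonneg_mul => //.
Qed.

(* With M = (1 - XY)^-1 >= 0: ((-X) E + F) u <= (1 - XY) u, hence
   F M ((-X) E + F) u <= F u. *)
Lemma doubleX_subinvariant X Y E F : sda_invariant X Y E F ->
  vlt ((- doubleX X Y E F + doubleE Y X F) *m u) u.
Proof.
move=> hinv; have [hX hY hE hF hXF hYE] := hinv.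
have [hU hM] := sda_invariant_inverse_nonneg hinv.
set M := invmx _ in hM.
have hu0 := posv_vle0 hu.
have hEu : vle (E *m u) (u + Y *m u).
  by move=> i; have := hYE i; rewrite mulmxDl !mxDE mulNmx mxNE; lra.
have hbound : vle (((- X) *m E + F) *m u) ((1%:M - X *m Y) *m u).
  move=> i; have := vle_mulmx hX hEu i; have := hXF i.
  by rewrite !mulmxDl mulmxDr mul1mx !mulNmx !mulmxA !mxDE !mxNE; lra.
have := vle_mulmx hF (vle_mulmx hM hbound).
rewrite mulmxA mulKmx // => hFM i; have := hFM i; have := hXF i.
have -> : (- doubleX X Y E F + doubleE Y X F) *m u
          = - X *m u + F *m M *m ((- X) *m E + F) *m u.
  rewrite /doubleX /doubleE opprD -/M mulmxDr !mulmxDl !mulmxA mulmxN !mulNmx.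
  by rewrite -!mulmxA addrA.
by rewrite [(- X + F) *m u]mulmxDl !mxDE -!mulmxA; lra.
Qed.

Lemma sda_invariant_double X Y E F : sda_invariant X Y E F ->
  sda_invariant (doubleX X Y E F) (doubleX Y X F E) (doubleE X Y E) (doubleE Y X F).
Proof.
move=> hinv; have hinvC := sda_invariantC hinv.
have [hX hY hE hF _ _] := hinv.
have nonnegE P Q A B : sda_invariant P Q A B -> mxnonneg (doubleE Q P B).
  move=> h; have [_ _ _ hB _ _] := h; have [_ hM] := sda_invariant_inverse_nonneg h.
  by rewrite /doubleE; do 2!apply: mxnonneg_mul => //.
split.
- rewrite -[doubleX _ _ _ _](subrK X) opprD opprB.
  by apply: mxnonneg_add; first exact: doubleX_le hinv.
- rewrite -[doubleX _ _ _ _](subrK Y) opprD opprB.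
  by apply: mxnonneg_add; first exact: doubleX_le hinvC.
- exact: nonnegE hinvC.
- exact: nonnegE hinv.
- exact: doubleX_subinvariant hinv.
- exact: doubleX_subinvariant hinvC.
Qed.

Lemma doubleX_scale (s : R) X Y E F : s * s = 1 ->
  doubleX X Y (s *: E) (s *: F) = doubleX X Y E F.
Proof.
by move=> hs; rewrite /doubleX -scalemxAr -!scalemxAl scalerA hs scale1r.
Qed.

Lemma doubleE_scale (s : R) X Y E : s * s = 1 -> doubleE X Y (s *: E) = doubleE X Y E.
Proof. by move=> hs; rewrite /doubleE -scalemxAr -!scalemxAl scalerA hs scale1r. Qed.

End DoublingStep.

Section Factorization.
Variables (R : rcfType) (n : nat).
Implicit Types X Y E F Phi P : 'M[R]_n.

Definition sda_factor X Y E F Phi P :=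
  E = (1%:M - Y *m Phi) *m P /\ X = Phi - F *m Phi *m P.

Lemma doubleE_factor X Y E F Phi P : 1%:M - Y *m X \in unitmx ->
  sda_factor X Y E F Phi P ->
  doubleE X Y E = (1%:M - doubleX Y X F E *m Phi) *m (P *m P).
Proof.
move=> hU [hE hX]; rewrite /doubleE /doubleX; set K := invmx _.
have e1 : 1%:M - Y *m Phi = (1%:M - Y *m X) - Y *m F *m Phi *m P.
  by rewrite hX mulmxBr !mulmxA opprB addrA addrAC addrK.
rewrite {2}hE e1 mulmxBl mulmxBr !mulmxA -(mulmxA E K (1%:M - Y *m X)) mulVmx // mulmx1.
rewrite !mulmxDl !mulNmx !mulmxDl !mul1mx.
by rewrite {1}hE !mulmxBl !mul1mx ?mulmxA opprD addrA.
Qed.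

Lemma doubleX_factor X Y E F Phi P : 1%:M - X *m Y \in unitmx ->
  sda_factor X Y E F Phi P ->
  doubleX X Y E F = Phi - doubleE Y X F *m Phi *m (P *m P).
Proof.
move=> hU [hE hX]; rewrite /doubleE /doubleX; set M := invmx _.
have hdiff : - ((1%:M - X *m Y) *m Phi *m P) + X *m (1%:M - Y *m Phi) *m P
           = - (F *m Phi *m P *m P).
  rewrite !mulmxBr !mulmx1 !mulmxBl !mul1mx !mulmxA.
  have -> : - (F *m Phi *m P *m P) = (X - Phi) *m P.
    by rewrite hX addrAC subrr add0r mulNmx.
  by rewrite [(X - Phi) *m P]mulmxBl opprB addrC addrA subrK.
have hFP : F *m Phi *m P = F *m M *m ((1%:M - X *m Y) *m Phi *m P).
  by rewrite -!mulmxA [M *m _]mulmxA mulVmx // mul1mx.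
have -> : X + F *m M *m X *m E = Phi + F *m M *m
    (- ((1%:M - X *m Y) *m Phi *m P) + X *m (1%:M - Y *m Phi) *m P).
  rewrite mulmxDr mulmxN -hFP !mulmxA.
  by rewrite -(mulmxA (F *m M *m X)) -hE {1}hX addrA.
by rewrite hdiff mulmxN !mulmxA.
Qed.

Lemma sda_factor_double X Y E F Phi P :
  1%:M - X *m Y \in unitmx -> 1%:M - Y *m X \in unitmx ->
  sda_factor X Y E F Phi P ->
  sda_factor (doubleX X Y E F) (doubleX Y X F E) (doubleE X Y E) (doubleE Y X F)
             Phi (P *m P).
Proof.
by move=> hXY hYX hf; split; [apply: doubleE_factor | apply: doubleX_factor].
Qed.

(* X - Phi = F (-Phi) P, and F = (1 - X Psi) Q <= Q. *)
Lemma sda_factor_bound X F Phi Psi P Q :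
  mxnonneg (- X) -> mxnonneg F -> mxnonneg (- Phi) -> mxnonneg P ->
  mxnonneg (- (Psi *m Q)) -> X = Phi - F *m Phi *m P -> F = (1%:M - X *m Psi) *m Q ->
  mxnonneg (X - Phi) /\ mxle (X - Phi) (Q *m (- Phi) *m P).
Proof.
move=> hX hF hPhi hP hQ eX eF.
have e1 : X - Phi = F *m (- Phi) *m P.
  by rewrite {1}eX addrAC subrr add0r mulmxN mulNmx.
split; first by rewrite e1; do 2!apply: mxnonneg_mul => //.
apply: mxle_subr; rewrite e1 -!mulmxBl.
have -> : Q - F = (- X) *m (- (Psi *m Q)).
  by rewrite eF mulmxBl mul1mx opprB addrC subrK mulNmx mulmxN opprK mulmxA.
by do 3!apply: mxnonneg_mul => //.
Qed.

End Factorization.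

Section SdaIteration.
Variables (R : rcfType) (n : nat) (B C : 'M[R]_n).

Local Notation X k := (sdaX B C k).
Local Notation Y k := (sdaY B C k).
Local Notation E k := (sdaE B C k).
Local Notation F k := (sdaF B C k).

Lemma sdaXS k : X k.+1 = doubleX (X k) (Y k) (E k) (F k).
Proof. by rewrite /sdaX /sdaY /sdaE /sdaF /=; case: sda => [[[]]]. Qed.

Lemma sdaYS k : Y k.+1 = doubleX (Y k) (X k) (F k) (E k).
Proof. by rewrite /sdaX /sdaY /sdaE /sdaF /=; case: sda => [[[]]]. Qed.

Lemma sdaES k : E k.+1 = doubleE (X k) (Y k) (E k).
Proof. by rewrite /sdaX /sdaY /sdaE /sdaF /=; case: sda => [[[]]]. Qed.

Lemma sdaFS k : F k.+1 = doubleE (Y k) (X k) (F k).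
Proof. by rewrite /sdaX /sdaY /sdaE /sdaF /=; case: sda => [[[]]]. Qed.

Hypotheses (hB : nsMmatrix B) (hBC : mxnonneg (invmx B *m C))
  (hA : nsMmatrix (B - C - 1%:M)).

Let u := invmx (B - C - 1%:M) *m onev R n.

Lemma posv_u : posv u.
Proof.
have [hAU hAi] := nsMmatrix_inverse_nonneg hA.
by apply: posv_mulmx_onev; rewrite ?unitmx_inv.
Qed.

(* E_0 = X_0 and F_0 = Y_0 are nonpositive while E_k, F_k are nonnegative for
   k >= 1; the doubling step only sees E and F through the products E . E,
   F . F and F . E, so the sign flip at k = 0 is harmless. *)
Definition sda_sign k : R := if k is 0 then -1 else 1.

Lemma sda_sign_sqr k : sda_sign k * sda_sign k = 1.
Proof. by case: k => [|k] /=; rewrite ?mulrNN mulr1. Qed.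

Lemma sda_invariant_init : sda_invariant u (X 0) (Y 0) (- E 0) (- F 0).
Proof.
have [hBU hBi] := nsMmatrix_inverse_nonneg hB.
have [hAU _] := nsMmatrix_inverse_nonneg hA.
have hpos : posv (invmx B *m onev R n).
  by apply: posv_mulmx_onev; rewrite ?unitmx_inv.
have e : invmx B *m onev R n = u - (invmx B *m C + invmx B) *m u.
  rewrite -[onev R n](mulKVmx hAU) !mulmxBl !mulmxBr mul1mx !mulmxA mulVmx //.
  by rewrite mul1mx /u !mulmxDl opprD addrA.
rewrite /sdaX /sdaY /sdaE /sdaF /=.
split; rewrite ?opprK //; [|rewrite addrC] => i.
  by have := hpos i; rewrite e mxDE mxNE subr_gt0.
by have := hpos i; rewrite e mxDE mxNE subr_gt0.
Qed.

Lemma sda_invariant_signed k :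
  sda_invariant u (X k) (Y k) (sda_sign k *: E k) (sda_sign k *: F k).
Proof.
elim: k => [|k IH]; first by rewrite /= !scaleN1r; exact: sda_invariant_init.
have := sda_invariant_double posv_u IH.
rewrite !doubleX_scale ?doubleE_scale ?sda_sign_sqr //.
by rewrite /= !scale1r sdaXS sdaYS sdaES sdaFS.
Qed.

Lemma sda_invariant_succ k : sda_invariant u (X k.+1) (Y k.+1) (E k.+1) (F k.+1).
Proof. by have := sda_invariant_signed k.+1; rewrite /= !scale1r. Qed.

Lemma sda_unitmx k : 1%:M - X k *m Y k \in unitmx /\ 1%:M - Y k *m X k \in unitmx.
Proof.
have h := sda_invariant_signed k.
have [hXY _] := sda_invariant_inverse_nonneg posv_u h.
by have [hYX _] := sda_invariant_inverse_nonneg posv_u (sda_invariantC h).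
Qed.

Lemma sda_nsMmatrix k : nsMmatrix (1%:M - X k *m Y k) /\ nsMmatrix (1%:M - Y k *m X k).
Proof.
have h := sda_invariant_signed k; have [hX hY _ _ _ _] := h.
split; apply: (subinvariant_nsMmatrix _ posv_u).
- exact: mxnonneg_mulNN.
- exact (sda_invariant_mulXY_lt posv_u h).
- exact: mxnonneg_mulNN.
- exact (sda_invariant_mulXY_lt posv_u (sda_invariantC h)).
Qed.

Lemma sda_le0 k : mxle (X k) 0 /\ mxle (Y k) 0.
Proof.
have [hX hY _ _ _ _] := sda_invariant_signed k.
by split; apply: mxle_subr; rewrite sub0r.
Qed.

Lemma sda_decr k : mxle (X k.+1) (X k) /\ mxle (Y k.+1) (Y k).
Proof.
have h := sda_invariant_signed k.
have := doubleX_le posv_u h; have := doubleX_le posv_u (sda_invariantC h).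
rewrite !doubleX_scale ?sda_sign_sqr // -sdaXS -sdaYS.
by split; apply: mxle_subr.
Qed.

Variables Phi Psi : 'M[R]_n.
Hypotheses (hPhi : max_nonpos_solvent_quad B C Phi)
  (hPsi : max_nonpos_solvent_dual B C Psi).

Lemma sda0_quad_solvent : X 0 = Phi - F 0 *m Phi *m Phi.
Proof.
have [hBU _] := nsMmatrix_inverse_nonneg hB.
case: hPhi => hquad _ _; have := congr1 (mulmx (invmx B)) hquad.
rewrite mulmx0 !mulmxDr [invmx B *m (B *m _)]mulmxA mulVmx // mul1mx.
move/eqP; rewrite addr_eq0 => /eqP hC.
by rewrite /sdaX /sdaF /= -hC !mulNmx opprK -mulmxA addrC.
Qed.

Lemma sda0_dual_solvent : Y 0 = Psi - E 0 *m Psi *m Psi.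
Proof.
have [hBU _] := nsMmatrix_inverse_nonneg hB.
case: hPsi => hdual _ _; have := congr1 (mulmx (invmx B)) hdual.
rewrite mulmx0 !mulmxDr [invmx B *m (B *m _)]mulmxA mulVmx // mul1mx mulmx1.
move/eqP; rewrite addr_eq0 => /eqP h1.
by rewrite /sdaY /sdaE /= -h1 !mulNmx opprK !mulmxA addrC.
Qed.

Lemma sda_factorization k :
  sda_factor (X k) (Y k) (E k) (F k) Phi (mxpow Phi (2 ^ k)) /\
  sda_factor (Y k) (X k) (F k) (E k) Psi (mxpow Psi (2 ^ k)).
Proof.
elim: k => [|k [hf hg]].
  rewrite expn0 /= !mulmx1 /sda_factor !mulmxBl !mul1mx.
  by rewrite -sda0_quad_solvent -sda0_dual_solvent.
have [hXY hYX] := sda_unitmx k.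
rewrite sdaXS sdaYS sdaES sdaFS !mxpow_double.
by split; apply: sda_factor_double.
Qed.

Lemma sda_error_bound k :
  (mxnonneg (X k.+1 - Phi) /\
   mxle (X k.+1 - Phi) (mxpow Psi (2 ^ k.+1) *m (- Phi) *m mxpow Phi (2 ^ k.+1))) /\
  (mxnonneg (Y k.+1 - Psi) /\
   mxle (Y k.+1 - Psi) (mxpow Phi (2 ^ k.+1) *m (- Psi) *m mxpow Psi (2 ^ k.+1))).
Proof.
have [[eE eX] [eF eY]] := sda_factorization k.+1.
have [hX hY hE hF _ _] := sda_invariant_succ k.
have hPhi0 : mxnonneg (- Phi) by case: hPhi => _ /mxle0_oppr.
have hPsi0 : mxnonneg (- Psi) by case: hPsi => _ /mxle0_oppr.
have [hPhi_even hPhi_odd] := mxpow_nonpos_sign (2 ^ k) hPhi0.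
have [hPsi_even hPsi_odd] := mxpow_nonpos_sign (2 ^ k) hPsi0.
rewrite expnS in eX eF eY eE *.
by split; [apply: (sda_factor_bound hX hF hPhi0 _ _ eX eF) |
           apply: (sda_factor_bound hY hE hPsi0 _ _ eY eE)].
Qed.

End SdaIteration.

Unset Implicit Arguments.

Theorem theorem3p5 (R : rcfType) (n : nat) (B C Phi Psi : 'M[R]_n) :
  nsMmatrix B -> Mmatrix C -> mxnonneg (invmx B *m C) ->
  nsMmatrix (B - C - 1%:M) ->
  max_nonpos_solvent_quad B C Phi ->
  max_nonpos_solvent_dual B C Psi ->
  (* well-definedness: all inverses in the recursion exist *)
  (forall i : nat,
      (1%:M - sdaX B C i *m sdaY B C i) \in unitmx /\
      (1%:M - sdaY B C i *m sdaX B C i) \in unitmx) /\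
  (forall k : nat, (1 <= k)%N ->
    let Xk := sdaX B C k in let Yk := sdaY B C k in
    let Ek := sdaE B C k in let Fk := sdaF B C k in
    let Xk1 := sdaX B C k.-1 in let Yk1 := sdaY B C k.-1 in
    (* (a) *)
    (Ek = (1%:M - Yk *m Phi) *m mxpow Phi (2 ^ k) /\ mxnonneg Ek) /\
    (* (b) *)
    (Fk = (1%:M - Xk *m Psi) *m mxpow Psi (2 ^ k) /\ mxnonneg Fk) /\
    (* (c) *)
    (nsMmatrix (1%:M - Xk *m Yk) /\ nsMmatrix (1%:M - Yk *m Xk)) /\
    (* (d) *)
    (mxle Phi Xk /\ mxle Xk Xk1 /\ mxle Xk1 0) /\
    (mxle Psi Yk /\ mxle Yk Yk1 /\ mxle Yk1 0) /\
    (mxnonneg (Xk - Phi) /\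
       mxle (Xk - Phi) (mxpow Psi (2 ^ k) *m (- Phi) *m mxpow Phi (2 ^ k))) /\
    (mxnonneg (Yk - Psi) /\
       mxle (Yk - Psi) (mxpow Phi (2 ^ k) *m (- Psi) *m mxpow Psi (2 ^ k)))).
Proof.
move=> hB _ hBC hA hPhi hPsi; split; first exact: sda_unitmx.
case=> [//|k] _ /=.
have [[eE _] [eF _]] := sda_factorization hB hBC hA hPhi hPsi k.+1.
have [_ _ hE hF _ _] := sda_invariant_succ hB hBC hA k.
have [hXdecr hYdecr] := sda_decr hB hBC hA k.
have [hX0 hY0] := sda_le0 hB hBC hA k.
have [[hXlo hXup] [hYlo hYup]] := sda_error_bound hB hBC hA hPhi hPsi k.
do !split => //; try exact: mxle_subr.
- exact: (sda_nsMmatrix hB hBC hA k.+1).1.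
- exact: (sda_nsMmatrix hB hBC hA k.+1).2.
Qed.
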